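(* Let $l$ be a prime number and let $a,b,c\in\mathbb{Z}$ satisfy $\gcd(a,b)=1$ and $$(a-b)^4+a^4+(a+b)^4=c^l,$$ equivalently $c^l=3a^4+12a^2b^2+2b^4$. Then $c$ is not divisible by $2$, $3$ or $5$; consequently $a$ is odd and $b$ is not divisible by $3$. *)

From Stdlib Require Import ZArith Znumtheory.

From Stdlib Require Import ZArith Znumtheory Lia List Morphisms.
Open Scope Z_scope.

(* The form (a - b)^4 + a^4 + (a + b)^4 = 3a^4 + 12a^2b^2 + 2b^4
   vanishes modulo 4, 9 and 5 only when both arguments are divisible by 2, 3
   and 5 respectively, which a finite check of residues confirms.  Since l >= 2,
   a factor 2 or 3 of c would put 4 or 9 into c^l, and a factor 5 would put 5
   into it, against gcd(a, b) = 1.  Finally, 2 | a or 3 | b would make the form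
   divisible by 2 or 3, hence c as well. *)

Definition quartic_form (a b : Z) : Z := (a - b) ^ 4 + a ^ 4 + (a + b) ^ 4.

Lemma prime_divide_pow p c n : prime p -> 0 <= n -> (p | c ^ n) -> (p | c).
Proof.
  intros Hp Hn. pattern n; apply Wf_Z.natlike_ind; [| |exact Hn].
  - intros H1. pose proof (prime_ge_2 p Hp).
    apply Z.divide_1_r_nonneg in H1; lia.
  - intros m Hm IH Hpow. rewrite Z.pow_succ_r in Hpow by exact Hm.
    destruct (prime_mult p Hp _ _ Hpow); auto.
Qed.

Lemma divide_pow d c n : 0 < n -> (d | c) -> (d | c ^ n).
Proof.
  intros Hn Hd. replace n with (1 + (n - 1)) by lia.
  rewrite Z.pow_add_r, Z.pow_1_r by lia. now apply Z.divide_mul_l.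
Qed.

Lemma square_divide_pow d c n : 2 <= n -> (d | c) -> (d * d | c ^ n).
Proof.
  intros Hn Hd. replace n with (2 + (n - 2)) by lia.
  rewrite Z.pow_add_r, Z.pow_2_r by lia. apply Z.divide_mul_l.
  destruct Hd as [k ->]. exists (k * k). ring.
Qed.

(* The [eqm] instances of Zdiv are local to their section. *)
#[local] Existing Instances eqm_setoid Zplus_eqm Zminus_eqm.

#[local] Instance Zpow_eqm q : Proper (eqm q ==> eq ==> eqm q) Z.pow.
Proof.
  intros x y Hxy n _ <-. unfold eqm in *.
  now rewrite <- Z.mod_pow_l, Hxy, Z.mod_pow_l.
Qed.

Definition residues (q : Z) : list Z := map Z.of_nat (seq 0 (Z.to_nat q)).

Lemma in_residues q r : 0 <= r < q -> In r (residues q).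
Proof.
  intros Hr. apply in_map_iff. exists (Z.to_nat r).
  split; [lia | apply in_seq; lia].
Qed.

Section ResidueCheck.

Variable f : Z -> Z -> Z.
Variables q p : Z.

Definition zeros_divisibleb : bool :=
  forallb (fun r => forallb (fun t =>
      negb (f r t mod q =? 0) || (r mod p =? 0) && (t mod p =? 0))%bool
    (residues q)) (residues q).

Hypothesis f_mod : forall a b, f (a mod q) (b mod q) mod q = f a b mod q.

Lemma zeros_divisibleb_sound :
  zeros_divisibleb = true -> 0 < q -> (p | q) ->
  forall a b, (q | f a b) -> (p | a) /\ (p | b).
Proof.
  intros Hcheck Hq Hpq a b Hab.
  assert (Hp : p <> 0) by (intros ->; apply Z.divide_0_l in Hpq; lia).
  assert (Hlift : forall x, (x mod q) mod p = 0 -> (p | x)).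
  { intros x Hx. rewrite (Z.div_mod x q) by lia.
    apply Z.divide_add_r; [now apply Z.divide_mul_l | now apply Z.mod_divide]. }
  assert (Hzero : f (a mod q) (b mod q) mod q = 0).
  { rewrite f_mod. now apply Zdivide_mod. }
  unfold zeros_divisibleb in Hcheck. rewrite forallb_forall in Hcheck.
  specialize (Hcheck _ (in_residues _ _ (Z.mod_pos_bound a q Hq))).
  rewrite forallb_forall in Hcheck.
  specialize (Hcheck _ (in_residues _ _ (Z.mod_pos_bound b q Hq))).
  rewrite Hzero in Hcheck. simpl in Hcheck.
  apply andb_prop in Hcheck as [Ha Hb]. apply Z.eqb_eq in Ha, Hb.
  split; now apply Hlift.
Qed.

End ResidueCheck.

Lemma quartic_form_mod q a b :
  quartic_form (a mod q) (b mod q) mod q = quartic_form a b mod q.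
Proof.
  change (eqm q (quartic_form (a mod q) (b mod q)) (quartic_form a b)).
  unfold quartic_form. now setoid_rewrite (Zmod_eqm q).
Qed.

Lemma coprime_not_divide_quartic_form q p a b :
  zeros_divisibleb quartic_form q p = true -> 0 < q -> 1 < p -> (p | q) ->
  Z.gcd a b = 1 -> ~ (q | quartic_form a b).
Proof.
  intros Hcheck Hq Hp Hpq Hgcd Hdiv.
  destruct (zeros_divisibleb_sound quartic_form q p (quartic_form_mod q)
              Hcheck Hq Hpq a b Hdiv) as [Ha Hb].
  pose proof (Z.gcd_greatest _ _ _ Ha Hb) as H1. rewrite Hgcd in H1.
  apply Z.divide_1_r_nonneg in H1; lia.
Qed.

Lemma not_divide_4_quartic_form a b : Z.gcd a b = 1 -> ~ (2 * 2 | quartic_form a b).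
Proof.
  apply coprime_not_divide_quartic_form with (p := 2);
    [reflexivity | lia | lia | exists 2; lia].
Qed.

Lemma not_divide_9_quartic_form a b : Z.gcd a b = 1 -> ~ (3 * 3 | quartic_form a b).
Proof.
  apply coprime_not_divide_quartic_form with (p := 3);
    [reflexivity | lia | lia | exists 3; lia].
Qed.

Lemma not_divide_5_quartic_form a b : Z.gcd a b = 1 -> ~ (5 | quartic_form a b).
Proof.
  apply coprime_not_divide_quartic_form with (p := 5);
    [reflexivity | lia | lia | apply Z.divide_refl].
Qed.

Lemma divide_2_quartic_form a b : (2 | a) -> (2 | quartic_form a b).
Proof.
  intros [k ->]. exists (24 * k ^ 4 + 24 * k ^ 2 * b ^ 2 + b ^ 4).
  unfold quartic_form. ring.
Qed.

Lemma divide_3_quartic_form a b : (3 | b) -> (3 | quartic_form a b).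
Proof.
  intros [k ->]. exists (a ^ 4 + 36 * a ^ 2 * k ^ 2 + 54 * k ^ 4).
  unfold quartic_form. ring.
Qed.

Theorem proposition2p1 (l : nat) (a b c : Z) :
  prime (Z.of_nat l) ->
  Z.gcd a b = 1 ->
  (a - b) ^ 4 + a ^ 4 + (a + b) ^ 4 = c ^ (Z.of_nat l) ->
  ~ (2 | c) /\ ~ (3 | c) /\ ~ (5 | c) /\ Z.odd a = true /\ ~ (3 | b).
Proof.
  intros Hl Hgcd Heq. fold (quartic_form a b) in Heq.
  pose proof (prime_ge_2 _ Hl) as Hl2.
  assert (N2 : ~ (2 | c)).
  { intros H. apply (not_divide_4_quartic_form a b Hgcd).
    rewrite Heq. now apply square_divide_pow. }
  assert (N3 : ~ (3 | c)).
  { intros H. apply (not_divide_9_quartic_form a b Hgcd).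
    rewrite Heq. now apply square_divide_pow. }
  assert (N5 : ~ (5 | c)).
  { intros H. apply (not_divide_5_quartic_form a b Hgcd).
    rewrite Heq. apply divide_pow; [lia | exact H]. }
  repeat split; try assumption.
  - destruct (Z.odd a) eqn:Hodd; [reflexivity | exfalso].
    apply N2, (prime_divide_pow 2 c (Z.of_nat l) prime_2); [lia |].
    rewrite <- Heq. apply divide_2_quartic_form, Z.mod_divide; [lia |].
    now rewrite Zmod_odd, Hodd.
  - intros Hb. apply N3, (prime_divide_pow 3 c (Z.of_nat l) prime_3); [lia |].
    rewrite <- Heq. now apply divide_3_quartic_form.
Qed.
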